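(* Let $I=[x_1,x_N]$ with partition $x_1<\dots<x_N$ and affine maps $u_i(x)=a_ix+b_i$ with $u_i(x_1)=x_i$, $u_i(x_N)=x_{i+1}$ ($i\in\mathbb{N}_{N-1}$). Let $\{f_k\}_{k\ge1}$ be a sequence of positive functions in $C(I)$ converging in sup-norm to $f\in C(I)$, and let $\{q_n\}_{n\ge1}$ be a sequence in $(0,1]$ with $\lim q_n=1$. For $k,n\in\mathbb{N}$ let $f^{(q_n,\alpha)}_{k,n}$ be the quantum MKZ-fractal function of $f_k$ with parameter $q_n$, i.e. the unique $g\in C(I)$ with $g(u_i(x))=f_k(u_i(x))+\alpha_i(x)(g(x)-M_{n,q_n}f_k(x))$ for all $x\in I$, $i\in\mathbb{N}_{N-1}$. Set $\phi(f_k,i)=\min_{x\in I}f_k(u_i(x))$, $\Phi(f_k,i)=\max_{x\in I}f_k(u_i(x))$, $\phi_{n,k}(f_k)=\min_{x\in I}M_{n,q_n}f_k(x)$, $\Phi_{n,k}(f_k)=\max_{x\in I}M_{n,q_n}f_k(x)$, and let $C^\dagger_{n,k}$ be a positive real number strictly greater than $\max\{\phi_{n,k}(f_k),\|f_k\|_\infty\}$. Suppose the continuous scaling functions satisfy (1) $\|\alpha_i\|_\infty<1$ for all $i$ and (2) for all $k,n\in\mathbb{N}$, $i\in\mathbb{N}_{N-1}$, $x\in I$: \[ \max\left\{\frac{-\phi(f_k,i)}{C^\dagger_{n,k}-\phi_{n,k}(f_k)},-\frac{C^\dagger_{n,k}-\Phi(f_k,i)}{\Phi_{n,k}(f_k)}\right\}\le\alpha_i(x)\le\min\left\{\frac{\phi(f_k,i)}{\Phi_{n,k}(f_k)},\frac{C^\dagger_{n,k}-\Phi(f_k,i)}{C^\dagger_{n,k}-\phi_{n,k}(f_k)}\right\}.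 \] Then every $f^{(q_n,\alpha)}_{k,n}$ is positive on $I$, and the double sequence $\{\{f^{(q_n,\alpha)}_{k,n}\}_n\}_k$ converges to $f$ in sup-norm, i.e. for every $\varepsilon>0$ there is $k_0$ with $\|f^{(q_n,\alpha)}_{k,n}-f\|_\infty<\varepsilon$ for all $k,n\ge k_0$.
   Context: A function is called positive if it is $\ge0$ on $I$. For $q\in(0,1]$: $[k]_q=\frac{1-q^k}{1-q}$ ($q\ne1$), $[k]_1=k$, $q$-factorials, $\binom{n}{k}_q=\frac{[n]_q!}{[k]_q![n-k]_q!}$. Quantum MKZ operator: $M_{n,q}h(x)=P_{n,q}(x)\sum_{k\ge0}\binom{n+k}{k}_q\left(\frac{x-x_1}{x_N-x_1}\right)^k h\!\left(x_1+(x_N-x_1)\frac{[k]_q}{[k+n]_q}\right)$ for $x_1\le x<x_N$, $M_{n,q}h(x_N)=h(x_N)$, $P_{n,q}(x)=\prod_{j=0}^n(x_N-x_1-q^j(x-x_1))/(x_N-x_1)^{n+1}$. $\|\alpha\|_\infty=\max_i\|\alpha_i\|_\infty$. *)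

From HB Require Import structures.
From mathcomp Require Import all_boot all_order all_algebra.
From mathcomp Require Import all_classical all_reals all_analysis.
Set Implicit Arguments. Unset Strict Implicit. Unset Printing Implicit Defensive.
Import Order.TTheory GRing.Theory Num.Theory.
Import numFieldNormedType.Exports.
Local Open Scope classical_set_scope.
Local Open Scope ring_scope.

Section Defs.
Variable R : realType.

Definition qint (q : R) (k : nat) : R :=
  if q == 1 then k%:R else (1 - q ^+ k) / (1 - q).

Definition qfact (q : R) (n : nat) : R := \prod_(1 <= j < n.+1) qint q j.

Definition qbinom (q : R) (n k : nat) : R :=
  qfact q n / (qfact q k * qfact q (n - k)).

Definition Iset (x1 xN : R) : set R := [set t | x1 <= t <= xN].

Definition Pq (x1 xN : R) (n : nat) (q : R) (x : R) : R :=
  (\prod_(0 <= j < n.+1) (xN - x1 - q ^+ j * (x - x1))) / (xN - x1) ^+ n.+1.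

Definition MKZ (x1 xN : R) (n : nat) (q : R) (h : R -> R) (x : R) : R :=
  if x == xN then h xN
  else Pq x1 xN n q x *
       limn (series (fun k : nat => qbinom q (n + k) k * ((x - x1) / (xN - x1)) ^+ k *
                          h (x1 + (xN - x1) * (qint q k / qint q (k + n))))).

Definition supnorm (x1 xN : R) (h : R -> R) : R :=
  sup [set `|h t| | t in Iset x1 xN].

(* minimum / maximum of a function over I (continuous functions: attained) *)
Definition minI (x1 xN : R) (h : R -> R) : R := inf [set h t | t in Iset x1 xN].
Definition maxI (x1 xN : R) (h : R -> R) : R := sup [set h t | t in Iset x1 xN].

End Defs.

From HB Require Import structures.
From mathcomp Require Import all_boot all_order all_algebra.
From mathcomp Require Import all_classical all_reals all_analysis.
From mathcomp Require Import ring lra.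
Set Implicit Arguments. Unset Strict Implicit. Unset Printing Implicit Defensive.
Import Order.TTheory GRing.Theory Num.Theory.
Import numFieldNormedType.Exports.
Local Open Scope classical_set_scope.
Local Open Scope ring_scope.

(* Positivity: on the i-th piece, g (u_i t) = f_k (u_i t) + alpha_i t (g t - M f_k t)
   is an affine function of g t with slope |alpha_i t| <= max_i ||alpha_i|| < 1, and
   condition (2) makes it map the band [0, C] into itself.  Hence the supremum of the
   distance from g to the band is contracted, so it vanishes.
   Convergence: the same contraction gives
   ||g - f_k|| <= ||M_{n,q_n} f_k - f_k|| / (1 - max_i ||alpha_i||).  The MKZ weights
   sum to 1 / P_{n,q} (a q-negative binomial series) and their nodes [k]_q / [k+n]_q
   have second central moment at most 1 / [n]_q, so a modulus e + K (s - t)^2 of f_k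
   gives |M_{n,q} f_k - f_k| <= e + K (x_N - x_1)^2 / [n]_q, while [n]_{q_n} -> oo
   as q_n -> 1. *)

Section NonnegSeries.
Variable R : realType.
Implicit Types (u a b c w h : R ^nat).

Lemma nondecreasing_nneg_series u : (forall k, 0 <= u k) ->
  nondecreasing_seq (series u).
Proof. by move=> u_ge0 m p le_mp; exact: nondecreasing_series. Qed.

Lemma cvgn_nneg_series_le u M : (forall k, 0 <= u k) ->
  (forall j, series u j <= M) -> cvgn (series u) /\ limn (series u) <= M.
Proof.
move=> u_ge0 u_le; have u_nd := nondecreasing_nneg_series u_ge0.
have /cvgP u_cvg : series u @ \oo --> sup (range (series u)).
  by apply: nondecreasing_cvgn => //; exists M => _ [j _ <-].
by split => //; apply: limr_le => //; exact: nearW.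
Qed.

Lemma nneg_series_le_cvg u l j : (forall k, 0 <= u k) ->
  series u @ \oo --> l -> series u j <= l.
Proof.
move=> u_ge0 u_cvg; rewrite -(cvg_lim _ u_cvg) //.
exact: nondecreasing_cvgn_le (nondecreasing_nneg_series u_ge0) (cvgP _ u_cvg) j.
Qed.

Lemma cvgn_affine_rec a b y l : 0 <= y < 1 -> nondecreasing_seq a ->
  (forall j, b j <= l) -> b @ \oo --> l ->
  (forall j, a j.+1 = y * a j + b j.+1) -> a @ \oo --> l / (1 - y).
Proof.
move=> /andP[y_ge0 y_lt1] a_nd b_le b_cvg a_rec.
have a_le j : a j <= l / (1 - y).
  have : a j <= y * a j + l.
    by rewrite (le_trans (a_nd _ _ (leqnSn j))) // a_rec lerD2l.
  by rewrite ler_pdivlMr ?subr_gt0 //; lra.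
have /cvgP a_cvg : a @ \oo --> sup (range a).
  by apply: nondecreasing_cvgn => //; exists (l / (1 - y)) => _ [j _ <-].
set A := limn a.
have A_fix : A = y * A + l.
  have aS_cvg : (fun j => a j.+1) @ \oo --> y * A + l.
    under eq_fun do rewrite a_rec.
    by apply: cvgD; [exact: cvgMl_tmp | rewrite (cvg_shiftS b)].
  have : (fun j => a j.+1) @ \oo --> A by rewrite (cvg_shiftS a).
  by move/cvg_unique; apply.
have -> : l = A * (1 - y) by rewrite mulrBr mulr1 {1}A_fix; ring.
by rewrite mulfK ?gt_eqF ?subr_gt0.
Qed.

Lemma weighted_series_approx c w h (S W h0 e K H : R) :
  (forall k, 0 <= c k) -> series c @ \oo --> S ->
  series (fun k => c k * w k) @ \oo --> W -> 0 <= K ->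
  (forall k, 0 <= h k <= H) -> (forall k, `|h k - h0| <= e + K * w k) ->
  exists L, [/\ series (fun k => c k * h k) @ \oo --> L, 0 <= L <= H * S
              & `|L - h0 * S| <= e * S + K * W].
Proof.
move=> c_ge0 c_cvg cw_cvg K_ge0 h_in h_close.
have ch_ge0 k : 0 <= c k * h k by rewrite mulr_ge0 //; case/andP: (h_in k).
have [ch_cvg ch_le] : cvgn (series (fun k => c k * h k)) /\
    limn (series (fun k => c k * h k)) <= H * S.
  apply: cvgn_nneg_series_le => // j.
  apply: le_trans (_ : H * series c j <= _); last first.
    by rewrite ler_wpM2l ?nneg_series_le_cvg //; case/andP: (h_in 0%N) => /le_trans; apply.
  rewrite /series /= mulr_sumr; apply: ler_sum => k _.
  by rewrite mulrC ler_wpM2r //; case/andP: (h_in k).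
exists (limn (series (fun k => c k * h k))); split => //.
  rewrite ch_le andbT; apply: limr_ge => //.
  by apply: nearW => j; apply: sumr_ge0 => k _.
have partial_close j : `|series (fun k => c k * h k) j - h0 * series c j|
    <= e * series c j + K * series (fun k => c k * w k) j.
  rewrite /series /= !mulr_sumr -sumrB -big_split /=.
  apply: le_trans (ler_norm_sum _ _ _) _; apply: ler_sum => k _.
  have -> : c k * h k - h0 * c k = c k * (h k - h0) by ring.
  have -> : e * c k + K * (c k * w k) = c k * (e + K * w k) by ring.
  by rewrite normrM ger0_norm // ler_wpM2l.
set L := limn _.
have dist_cvg : (fun j => `|series (fun k => c k * h k) j - h0 * series c j|)
    @ \oo --> `|L - h0 * S|.
  by apply: cvg_norm; apply: cvgB; [exact: ch_cvg | exact: cvgMl_tmp].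
have bound_cvg : (fun j => e * series c j + K * series (fun k => c k * w k) j)
    @ \oo --> e * S + K * W by apply: cvgD; exact: cvgMl_tmp.
rewrite -(cvg_lim _ dist_cvg) // -(cvg_lim _ bound_cvg) //.
by apply: ler_lim; [exact: cvgP dist_cvg | exact: cvgP bound_cvg | exact: nearW].
Qed.

End NonnegSeries.

Definition mkz_coef {R : realType} (q : R) n k := qbinom q (n + k) k.

Definition mkz_node {R : realType} (q : R) n k := qint q k / qint q (k + n).

Section QCalculus.
Variables (R : realType) (q : R).
Hypothesis q_gt0 : 0 < q.
Hypothesis q_le1 : q <= 1.

Lemma qintE k : qint q k = \sum_(i < k) q ^+ i.
Proof.
rewrite /qint; case: eqP => [->|/eqP qN1].
  by under eq_bigr do rewrite expr1n; rewrite sumr_const card_ord.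
have q1_neq0 : 1 - q != 0 by rewrite subr_eq0 eq_sym.
apply: (mulfI q1_neq0); rewrite mulrC divfK //.
have := subrX1 q k; rewrite -opprB -[q - 1]opprB mulNr => /eqP.
by rewrite eqr_opp => /eqP ->; rewrite mulrC.
Qed.

Lemma qint0 : qint q 0 = 0.
Proof. by rewrite qintE big_ord0. Qed.

Lemma qintD m k : qint q (m + k) = qint q m + q ^+ m * qint q k.
Proof.
rewrite !qintE big_split_ord /=; congr (_ + _); rewrite mulr_sumr.
by apply: eq_bigr => i _; rewrite exprD.
Qed.

Lemma qintS k : qint q k.+1 = qint q k + q ^+ k.
Proof. by rewrite -addn1 qintD [qint q 1]qintE big_ord1 expr0 mulr1. Qed.

Lemma qint_ge0 k : 0 <= qint q k.
Proof. by rewrite qintE sumr_ge0 // => i _; rewrite exprn_ge0 // ltW. Qed.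

Lemma qint_gt0 k : (0 < k)%N -> 0 < qint q k.
Proof.
by case: k => // k _; rewrite qintS ltr_wpDl ?qint_ge0 ?exprn_gt0.
Qed.

Lemma le_qint m k : (m <= k)%N -> qint q m <= qint q k.
Proof.
move=> le_mk; rewrite -(subnKC le_mk) qintD lerDl.
by rewrite mulr_ge0 ?qint_ge0 // exprn_ge0 // ltW.
Qed.

Lemma qfact0 : qfact q 0 = 1.
Proof. by rewrite /qfact big_geq. Qed.

Lemma qfactS n : qfact q n.+1 = qfact q n * qint q n.+1.
Proof. by rewrite /qfact big_nat_recr. Qed.

Lemma qfact_gt0 n : 0 < qfact q n.
Proof. by elim: n => [|n IH]; rewrite ?qfact0 // qfactS mulr_gt0 ?qint_gt0. Qed.

Lemma mkz_coefE n k : mkz_coef q n k = qfact q (n + k) / (qfact q k * qfact q n).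
Proof. by rewrite /mkz_coef /qbinom addnK. Qed.

Lemma mkz_coef_gt0 n k : 0 < mkz_coef q n k.
Proof. by rewrite mkz_coefE divr_gt0 ?mulr_gt0 ?qfact_gt0. Qed.

Lemma mkz_coefn0 n : mkz_coef q n 0 = 1.
Proof. by rewrite mkz_coefE addn0 qfact0 mul1r divff // gt_eqF ?qfact_gt0. Qed.

Lemma mkz_coef0k k : mkz_coef q 0 k = 1.
Proof. by rewrite mkz_coefE add0n qfact0 mulr1 divff // gt_eqF ?qfact_gt0. Qed.

Lemma mkz_coefSS n k :
  mkz_coef q n.+1 k.+1 = mkz_coef q n.+1 k + q ^+ k.+1 * mkz_coef q n k.+1.
Proof.
rewrite !mkz_coefE !addSn !addnS !qfactS.
have -> : qint q (n + k).+2 = qint q k.+1 + q ^+ k.+1 * qint q n.+1.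
  by rewrite -qintD addSn addnS addnC.
have := gt_eqF (qfact_gt0 (n + k)); have := gt_eqF (qfact_gt0 k).
have := gt_eqF (qfact_gt0 n); have := gt_eqF (qint_gt0 (ltn0Sn k)).
have := gt_eqF (qint_gt0 (ltn0Sn n)).
by move=> h1 h2 h3 h4 h5; field; rewrite ?h1 ?h2 ?h3 ?h4 ?h5.
Qed.

Lemma mkz_coefS_node n k : mkz_coef q n k.+1 * mkz_node q n k.+1 = mkz_coef q n k.
Proof.
rewrite /mkz_node !mkz_coefE addnS addSn addnC !qfactS.
have := gt_eqF (qfact_gt0 (n + k)); have := gt_eqF (qfact_gt0 k).
have := gt_eqF (qfact_gt0 n); have := gt_eqF (qint_gt0 (ltn0Sn k)).
have := gt_eqF (qint_gt0 (ltn0Sn (k + n))).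
by move=> h1 h2 h3 h4 h5; field; rewrite ?h1 ?h2 ?h3 ?h4 ?h5.
Qed.

Lemma mkz_node0 n : mkz_node q n 0 = 0.
Proof. by rewrite /mkz_node qint0 mul0r. Qed.

Lemma mkz_node_ge0 n k : 0 <= mkz_node q n k.
Proof. by rewrite divr_ge0 ?qint_ge0. Qed.

Lemma mkz_node_le1 n k : (0 < n)%N -> mkz_node q n k <= 1.
Proof.
move=> n_gt0; rewrite ler_pdivrMr ?mul1r ?le_qint ?leq_addr //.
by rewrite qint_gt0 // addn_gt0 n_gt0 orbT.
Qed.

(* The nodes grow by at most [1/[n]_q] at each step: this yields the [1/[n]_q]
   bound on the second central moment of the MKZ weights. *)
Lemma mkz_nodeS_le n k : (0 < n)%N ->
  mkz_node q n k.+1 <= mkz_node q n k + (qint q n)^-1.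
Proof.
move=> n_gt0; rewrite /mkz_node.
set u := qint q k; set m := qint q n; set D := qint q (k + n).
have eD : D = m + q ^+ n * u by rewrite /D addnC qintD.
have -> : qint q k.+1 = u + q ^+ k by rewrite qintS.
have -> : qint q (k.+1 + n) = D + q ^+ k * q ^+ n by rewrite addSn qintS exprD.
have m_gt0 : 0 < m by exact: qint_gt0.
have u_ge0 : 0 <= u by exact: qint_ge0.
have pk_gt0 : 0 < q ^+ k by exact: exprn_gt0.
have pk_le1 : q ^+ k <= 1 by exact: exprn_ile1 (ltW q_gt0) q_le1.
have pn_gt0 : 0 < q ^+ n by exact: exprn_gt0.
have m_le_D : m <= D by rewrite le_qint // leq_addl.
have D_gt0 : 0 < D by exact: lt_le_trans m_le_D.
set p := q ^+ k in pk_gt0 pk_le1 *; set r := q ^+ n in pn_gt0 eD *.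
set E := D + p * r.
have m_le_E : m <= E by rewrite (le_trans m_le_D) // lerDl ltW // mulr_gt0.
have -> : (u + p) / E = u / D + p * m / (D * E).
  have D_neq0 := gt_eqF D_gt0; have E_neq0 := gt_eqF (lt_le_trans m_gt0 m_le_E).
  by rewrite /E eD in E_neq0 *; rewrite eD in D_neq0; field; rewrite E_neq0 D_neq0.
rewrite lerD2l ler_pdivrMr ?mulr_gt0 ?(lt_le_trans m_gt0) //.
rewrite -(ler_pM2r m_gt0) [X in _ <= X]mulrAC mulVf ?gt_eqF // mul1r.
apply: le_trans (_ : m * m <= D * E); last by rewrite ler_pM // ltW.
by rewrite -mulrA ler_piMl // mulr_ge0 // ltW.
Qed.

Lemma mkz_seriesS n y j :
  series (fun k => mkz_coef q n.+1 k * y ^+ k) j.+1 =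
  y * series (fun k => mkz_coef q n.+1 k * y ^+ k) j
  + series (fun k => mkz_coef q n k * (q * y) ^+ k) j.+1.
Proof.
rewrite /series /= !big_nat_recl // !mkz_coefn0 !expr0 !mulr1 addrCA.
congr (_ + _); under eq_bigr do rewrite mkz_coefSS mulrDl.
rewrite big_split /= mulr_sumr; congr (_ + _); apply: eq_bigr => k _.
  by rewrite exprS; ring.
by rewrite exprMn; ring.
Qed.

Lemma cvg_mkz_series n y : 0 <= y < 1 ->
  series (fun k => mkz_coef q n k * y ^+ k) @ \oo
    --> (\prod_(j < n.+1) (1 - q ^+ j * y))^-1.
Proof.
elim: n y => [|n IH] y /andP[y_ge0 y_lt1].
  have -> : (fun k => mkz_coef q 0 k * y ^+ k) = geometric 1 y.
    by apply/funext => k; rewrite mkz_coef0k.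
  rewrite big_ord1 expr0 mul1r.
  by have := @cvg_geometric_series R 1 y; rewrite mul1r; apply; rewrite ger0_norm.
have qy_in : 0 <= q * y < 1.
  by rewrite mulr_ge0 ?(ltW q_gt0) //= (le_lt_trans (ler_piMl y_ge0 q_le1)).
have -> : (\prod_(j < n.+2) (1 - q ^+ j * y))^-1
    = (\prod_(j < n.+1) (1 - q ^+ j * (q * y)))^-1 / (1 - y).
  rewrite big_ord_recl expr0 mul1r invfM mulrC; congr (_^-1 * _).
  by apply: eq_bigr => i _; rewrite lift0 exprSr mulrA.
apply: cvgn_affine_rec (IH _ qy_in) _; first by rewrite y_ge0.
- apply: nondecreasing_nneg_series => k.
  by rewrite mulr_ge0 ?exprn_ge0 // ltW // mkz_coef_gt0.
- move=> j; apply: nneg_series_le_cvg (IH _ qy_in) => k.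
  by rewrite mulr_ge0 ?exprn_ge0 ?(ltW (mkz_coef_gt0 _ _)) // mulr_ge0 // ltW.
- exact: mkz_seriesS.
Qed.

Section MKZMoments.
Variable n : nat.
Hypothesis n_gt0 : (0 < n)%N.
Variable y : R.
Hypotheses (y_ge0 : 0 <= y) (y_lt1 : y < 1).

Let c k := mkz_coef q n k * y ^+ k.
Let xi := mkz_node q n.
Let P := \prod_(j < n.+1) (1 - q ^+ j * y).

Let c_ge0 k : 0 <= c k.
Proof. by rewrite mulr_ge0 ?exprn_ge0 // ltW // mkz_coef_gt0. Qed.

Let P_gt0 : 0 < P.
Proof.
rewrite prodr_gt0 // => j _; rewrite subr_gt0 (le_lt_trans _ y_lt1) //.
by rewrite ler_piMl // exprn_ile1 // ltW.
Qed.

Let c_cvg : series c @ \oo --> P^-1.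
Proof. by apply: cvg_mkz_series; rewrite y_ge0. Qed.

Let moment_shift m j :
  series (fun k => c k * xi k ^+ m.+1) j.+1 = y * series (fun k => c k * xi k.+1 ^+ m) j.
Proof.
rewrite /series /= big_nat_recl // /xi mkz_node0 expr0n mulr0 add0r mulr_sumr.
by apply: eq_bigr => k _; rewrite /c !exprS -(mkz_coefS_node n k); ring.
Qed.

Let first_moment : series (fun k => c k * xi k ^+ 1) @ \oo --> y / P.
Proof.
rewrite -cvg_shiftS; under eq_fun do rewrite moment_shift.
have -> : series (fun k => c k * xi k.+1 ^+ 0) = series c.
  by apply/funext => j; apply: eq_bigr => k _; rewrite expr0 mulr1.
exact: cvgMl_tmp.
Qed.

Let second_moment_le : cvgn (series (fun k => c k * xi k ^+ 2)) /\
  limn (series (fun k => c k * xi k ^+ 2)) <= y * (y / P + P^-1 / qint q n).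
Proof.
have m_gt0 : 0 < qint q n by exact: qint_gt0.
have P_ge0 := ltW P_gt0.
apply: cvgn_nneg_series_le => [k|[|j]]; first by rewrite mulr_ge0 ?exprn_ge0 ?mkz_node_ge0.
  by rewrite /series /= big_geq // !mulr_ge0 ?addr_ge0 ?divr_ge0 ?invr_ge0 // ltW.
rewrite moment_shift ler_wpM2l //.
apply: le_trans (_ : series (fun k => c k * xi k ^+ 1 + c k / qint q n) j <= _).
  apply: ler_sum => k _; rewrite -mulrDr ler_wpM2l //; exact: mkz_nodeS_le.
rewrite /series /= big_split /= -mulr_suml lerD //.
  apply: nneg_series_le_cvg first_moment => k.
  by rewrite mulr_ge0 ?mkz_node_ge0.
rewrite ler_wpM2r ?invr_ge0 ?(ltW m_gt0) //; exact: nneg_series_le_cvg c_cvg.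
Qed.

Let central_moment : exists2 W,
  series (fun k => c k * (xi k - y) ^+ 2) @ \oo --> W & W <= P^-1 / qint q n.
Proof.
have [xi2_cvg xi2_le] := second_moment_le.
set T2 := limn _ in xi2_le.
exists (T2 - 2 * y * (y / P) + y ^+ 2 * P^-1).
  have -> : series (fun k => c k * (xi k - y) ^+ 2) = (fun j =>
      series (fun k => c k * xi k ^+ 2) j - 2 * y * series (fun k => c k * xi k ^+ 1) j
      + y ^+ 2 * series c j).
    apply/funext => j; rewrite /series /= !mulr_sumr -sumrB -big_split /=.
    by apply: eq_bigr => k _; ring.
  by apply: cvgD; [apply: cvgB | ]; [exact: xi2_cvg | exact: cvgMl_tmp ..].
set D := P^-1 / qint q n in xi2_le *.
have D_ge0 : 0 <= D by rewrite divr_ge0 ?qint_ge0 // invr_ge0 ltW.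
have : y * D <= D by rewrite ler_piMl // ltW.
by move: xi2_le; rewrite mulrDr expr2 !mulrA; lra.
Qed.

Lemma mkz_weighted_approx (h : R ^nat) h0 e K H : 0 <= e -> 0 <= K ->
  (forall k, 0 <= h k <= H) -> (forall k, `|h k - h0| <= e + K * (xi k - y) ^+ 2) ->
  exists L, [/\ series (fun k => c k * h k) @ \oo --> L, 0 <= P * L <= H
              & `|P * L - h0| <= e + K / qint q n].
Proof.
move=> e_ge0 K_ge0 h_in h_close; have [W W_cvg W_le] := central_moment.
have [L [ch_cvg /andP[L_ge0 L_le] L_close]] :=
  weighted_series_approx c_ge0 c_cvg W_cvg K_ge0 h_in h_close.
have P_ge0 := ltW P_gt0; have P_neq0 := lt0r_neq0 P_gt0.
exists L; split => //.
  rewrite mulr_ge0 //=; apply: le_trans (ler_wpM2l P_ge0 L_le) _.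
  by rewrite mulrCA mulfV // mulr1.
have -> : P * L - h0 = P * (L - h0 * P^-1) by field.
rewrite normrM gtr0_norm //; apply: le_trans (ler_wpM2l P_ge0 L_close) _.
rewrite mulrDr mulrCA mulfV // mulr1 lerD2l mulrCA ler_wpM2l //.
by apply: le_trans (ler_wpM2l P_ge0 W_le) _; rewrite mulrA mulfV // mul1r.
Qed.

End MKZMoments.

Lemma Pq_prod x1 xN n t : x1 < xN ->
  Pq x1 xN n q t = \prod_(j < n.+1) (1 - q ^+ j * ((t - x1) / (xN - x1))).
Proof.
move=> x1_lt_xN; have L_neq0 : xN - x1 != 0 by rewrite lt0r_neq0 // subr_gt0.
rewrite /Pq big_mkord (eq_bigr (fun j : 'I_n.+1 =>
  (xN - x1) * (1 - q ^+ j * ((t - x1) / (xN - x1))))) => [|j _]; last by field.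
by rewrite big_split /= prodr_const card_ord [_ ^+ n.+1 * _]mulrC mulrK // unitfE expf_neq0.
Qed.

Lemma mkz_node_in x1 xN n k : x1 < xN -> (0 < n)%N ->
  Iset x1 xN (x1 + (xN - x1) * mkz_node q n k).
Proof.
move=> x1_lt_xN n_gt0; have L_gt0 : 0 < xN - x1 by rewrite subr_gt0.
apply/andP; split; first by rewrite lerDl mulr_ge0 ?mkz_node_ge0 // ltW.
by rewrite -lerBrDl ler_piMr ?mkz_node_le1 // ltW.
Qed.

(* Korovkin-type estimate: a modulus of continuity of [h] at [t] of the form
   [e + K (s - t)^2] is transported through the second central moment. *)
Lemma mkz_approx x1 xN n (h : R -> R) t e K H :
  x1 < xN -> (0 < n)%N -> Iset x1 xN t -> 0 <= e -> 0 <= K ->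
  (forall s, Iset x1 xN s -> 0 <= h s <= H) ->
  (forall s, Iset x1 xN s -> `|h s - h t| <= e + K * (s - t) ^+ 2) ->
  0 <= MKZ x1 xN n q h t <= H /\
  `|MKZ x1 xN n q h t - h t| <= e + K * (xN - x1) ^+ 2 / qint q n.
Proof.
move=> x1_lt_xN n_gt0 It e_ge0 K_ge0 h_in h_close.
rewrite /MKZ; case: eqP => [->|/eqP t_neq_xN].
  split; first by apply: h_in; rewrite /Iset /= lexx ltW.
  by rewrite subrr normr0 addr_ge0 // divr_ge0 ?qint_ge0 // mulr_ge0 ?sqr_ge0.
set L := xN - x1; have L_gt0 : 0 < L by rewrite subr_gt0.
have /andP[x1_le_t t_le_xN] := It.
set y := (t - x1) / L.
have y_ge0 : 0 <= y by rewrite divr_ge0 ?subr_ge0 // ltW.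
have y_lt1 : y < 1 by rewrite ltr_pdivrMr // mul1r ltrD2r lt_neqAle t_neq_xN.
rewrite Pq_prod // -/L -/y.
have node_close k : `|h (x1 + L * mkz_node q n k) - h t|
    <= e + K * L ^+ 2 * (mkz_node q n k - y) ^+ 2.
  apply: le_trans (h_close _ (mkz_node_in _ x1_lt_xN n_gt0)) _.
  have -> : x1 + L * mkz_node q n k - t = L * (mkz_node q n k - y).
    by rewrite /y; field; exact: lt0r_neq0.
  by rewrite exprMn mulrA.
have [M [M_cvg M_in M_close]] := mkz_weighted_approx n_gt0 y_ge0 y_lt1 e_ge0
  (mulr_ge0 K_ge0 (sqr_ge0 L)) (fun k => h_in _ (mkz_node_in k x1_lt_xN n_gt0))
  node_close.
by rewrite (cvg_lim _ M_cvg).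
Qed.

Lemma mkz_ge0_le x1 xN n (h : R -> R) t H :
  x1 < xN -> (0 < n)%N -> Iset x1 xN t ->
  (forall s, Iset x1 xN s -> 0 <= h s <= H) -> 0 <= MKZ x1 xN n q h t <= H.
Proof.
move=> x1_lt_xN n_gt0 It h_in.
have H_ge0 : 0 <= H by case/andP: (h_in t It) => /le_trans; apply.
have [] // := mkz_approx x1_lt_xN n_gt0 It H_ge0 (lexx 0) h_in.
move=> s Is; rewrite mul0r addr0 ler_norml.
by case/andP: (h_in s Is) => ? ?; case/andP: (h_in t It) => ? ?; apply/andP; split; lra.
Qed.

End QCalculus.

Section ImageBounds.
Variable R : realType.
Implicit Types (A : set R) (F : R -> R).

Lemma le_sup_image A F M t :
  (forall s, A s -> F s <= M) -> A t -> F t <= sup [set F s | s in A].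
Proof.
move=> F_le At; apply: sup_upper_bound; last by exists t.
by split; [exists (F t), t | exists M => _ [s As <-]; exact: F_le].
Qed.

Lemma sup_image_le A F B :
  A !=set0 -> (forall s, A s -> F s <= B) -> sup [set F s | s in A] <= B.
Proof.
move=> [t At] F_le; apply: ge_sup; first by exists (F t), t.
by move=> _ [s As <-]; exact: F_le.
Qed.

Lemma inf_image_le A F M t :
  (forall s, A s -> M <= F s) -> A t -> inf [set F s | s in A] <= F t.
Proof.
move=> F_ge At; apply: ge_inf; last by exists t.
by exists M => _ [s As <-]; exact: F_ge.
Qed.

Lemma le_inf_image A F B :
  A !=set0 -> (forall s, A s -> B <= F s) -> B <= inf [set F s | s in A].
Proof.
move=> [t At] F_ge; apply: lb_le_inf; first by exists (F t), t.
by move=> _ [s As <-]; exact: F_ge.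
Qed.

End ImageBounds.

Section IntervalFunctions.
Variables (R : realType) (x1 xN : R).
Implicit Types (h : R -> R).

Lemma Iset_compact : compact (Iset x1 xN).
Proof.
have -> : Iset x1 xN = `[x1, xN]%classic by apply/seteqP; split => t; rewrite /= in_itv.
exact: segment_compact.
Qed.

Lemma continuous_Iset_bounded h : {within Iset x1 xN, continuous h} ->
  exists M, forall t, Iset x1 xN t -> `|h t| <= M.
Proof.
move=> h_cont; have [M0 [M0_real M0_ub]] :=
  compact_bounded (continuous_compact h_cont Iset_compact).
exists (`|M0| + 1) => t It; apply: M0_ub; last by exists t.
by rewrite (le_lt_trans (real_ler_norm M0_real)) // ltrDl.
Qed.

Lemma le_supnorm h t : {within Iset x1 xN, continuous h} -> Iset x1 xN t ->
  `|h t| <= supnorm x1 xN h.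
Proof.
move=> /continuous_Iset_bounded[M h_le] It.
exact: (le_sup_image (F := fun s => `|h s|) h_le It).
Qed.

Lemma continuous_Iset_unif h e : {within Iset x1 xN, continuous h} -> 0 < e ->
  exists2 d, 0 < d & forall s t, Iset x1 xN s -> Iset x1 xN t ->
    `|s - t| < d -> `|h s - h t| < e.
Proof.
move=> h_cont e_gt0.
pose close d s := forall t, Iset x1 xN t -> `|s - t| < d -> `|h s - h t| < e.
suff [d [d_gt0 d_close]] : exists d, 0 < d /\ Iset x1 xN `<=` close d.
  by exists d => // s t Is; exact: d_close.
suff near_close : \forall d \near (0 : R)^'+, Iset x1 xN `<=` close d.
  by have [d [? ?]] := filter_ex (filterI (nbhs_right_gt 0) near_close); exists d.
apply: ((near_covering_withinP _).2 ((compact_near_coveringP _).1 Iset_compact)).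
move=> s Is; have /subspace_continuousP/(_ s Is) := h_cont.
move=> /cvgrPdist_lt /(_ (e / 2) (divr_gt0 e_gt0 (ltr0Sn _ 1))) /nbhs_ballP[r r_gt0 r_ball].
have r2_gt0 : 0 < r / 2 by exact: divr_gt0 r_gt0 (ltr0Sn _ 1).
exists (ball s (r / 2), ball (0 : R) (r / 2)) => /=.
  split; first exact: nbhsx_ballx.
  by apply: filterS (nbhsx_ballx (0 : R) _ r2_gt0) => d.
move=> [s' d] [/= s's d0] Is' t It s't_lt; rewrite /ball /= in s's d0.
have ball_s u : `|s - u| < r / 2 -> ball s r u.
  by move=> su; rewrite /ball /= (lt_le_trans su) // ler_pdivrMr //; lra.
have d_lt : d < r / 2 by apply: le_lt_trans (ler_norm d) _; rewrite -normrN -sub0r.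
have st_lt : `|s - t| < r.
  rewrite [r](splitr r); apply: le_lt_trans (ler_distD s' _ _) _.
  by rewrite ltrD ?(lt_trans s't_lt).
have := r_ball s' (ball_s _ s's) Is'; have := r_ball t st_lt It.
rewrite /from_subspace => hst hss'.
apply: le_lt_trans (ler_distD (h s) _ _) _.
by rewrite [e](splitr e) (distrC (h s')) ltrD.
Qed.

Lemma continuous_Iset_sq_modulus h e : {within Iset x1 xN, continuous h} -> 0 < e ->
  exists2 K, 0 <= K & forall s t, Iset x1 xN s -> Iset x1 xN t ->
    `|h s - h t| <= e + K * (s - t) ^+ 2.
Proof.
move=> h_cont e_gt0; have [B h_le] := continuous_Iset_bounded h_cont.
have [d d_gt0 d_close] := continuous_Iset_unif h_cont e_gt0.
set K := 2 * `|B| / d ^+ 2.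
have K_ge0 : 0 <= K by rewrite divr_ge0 ?exprn_ge0 ?mulr_ge0 // ltW.
have Kd : K * d ^+ 2 = 2 * `|B| by rewrite divfK // expf_neq0 // lt0r_neq0.
exists K => // s t Is It.
have Kst_ge0 : 0 <= K * (s - t) ^+ 2 by rewrite mulr_ge0 ?sqr_ge0.
have [st_lt|st_ge] := ltP `|s - t| d; first by have := d_close s t Is It st_lt; lra.
have : 2 * `|B| <= K * (s - t) ^+ 2.
  rewrite -Kd ler_wpM2l // -[(s - t) ^+ 2]ger0_norm ?sqr_ge0 // normrX.
  by rewrite lerXn2r // ?nnegrE ?ltW.
have := ler_normB (h s) (h t); have := h_le s Is; have := h_le t It.
have := ler_norm B; lra.
Qed.

End IntervalFunctions.

Section BandContraction.
Variable R : realType.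

Definition band_excess (C v : R) := Num.max 0 (Num.max (- v) (v - C)).

Lemma band_excess_ge0 C v : 0 <= band_excess C v.
Proof. by rewrite le_max lexx. Qed.

Lemma band_excess_le_dist C v c : 0 <= c <= C -> band_excess C v <= `|v - c|.
Proof.
move=> /andP[c_ge0 c_le]; have := ler_norm (v - c); have := ler_norm (c - v).
by rewrite distrC !ge_max normr_ge0 /= => *; apply/andP; split; lra.
Qed.

Lemma band_excess_attained C v : 0 <= C ->
  exists2 c, 0 <= c <= C & `|v - c| <= band_excess C v.
Proof.
move=> C_ge0; rewrite /band_excess.
have [v_lt0|v_ge0] := ltP v 0.
  by exists 0; rewrite ?lexx ?C_ge0 // subr0 ltr0_norm // !le_max lexx orbT.
have [C_lt_v|v_le_C] := ltP C v.
  by exists C; rewrite ?lexx ?C_ge0 // gtr0_norm ?subr_gt0 // !le_max lexx !orbT.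
by exists v; rewrite ?v_ge0 ?v_le_C // subrr normr0 band_excess_ge0.
Qed.

Lemma band_excess_le0 C v : band_excess C v <= 0 -> 0 <= v <= C.
Proof. by rewrite !ge_max => /and3P[_]; rewrite oppr_le0 subr_le0 => -> ->. Qed.

(* Each value of [g] is the image of another one under an affine map of slope at
   most [aa] preserving the band, so the supremum of the excess is at most [aa]
   times itself. *)
Lemma contraction_band (I : set R) (g : R -> R) (C aa : R) :
  I !=set0 -> (exists M, forall t, I t -> `|g t| <= M) -> 0 <= aa < 1 -> 0 <= C ->
  (forall y, I y -> exists2 t, I t & exists al A0, [/\ `|al| <= aa,
      g y = A0 + al * g t & forall c, 0 <= c <= C -> 0 <= A0 + al * c <= C]) ->
  forall t, I t -> 0 <= g t <= C.
Proof.
move=> I_n0 [M g_le] /andP[aa_ge0 aa_lt1] C_ge0 g_rec.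
have excess_le t : I t -> band_excess C (g t) <= M + C.
  move=> It; have := g_le t It; rewrite ler_norml !ge_max => /andP[? ?].
  by apply/andP; split; last (apply/andP; split); lra.
set D := sup [set band_excess C (g s) | s in I].
have le_D t : I t -> band_excess C (g t) <= D by exact: le_sup_image excess_le.
have D_le : D <= aa * D.
  apply: sup_image_le => // y Iy; have [t It [al [A0 [al_le gy band_A]]]] := g_rec y Iy.
  have [c c_in gtc_le] := band_excess_attained (g t) C_ge0.
  apply: le_trans (band_excess_le_dist (g y) (band_A c c_in)) _.
  rewrite gy (_ : _ - _ = al * (g t - c)); last by ring.
  by rewrite normrM ler_pM ?normr_ge0 // (le_trans gtc_le) ?le_D.
have D_le0 : D <= 0.
  have : (1 - aa) * D <= 0 by rewrite mulrBl mul1r subr_le0.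
  by rewrite pmulr_rle0 // subr_gt0.
by move=> t It; apply: band_excess_le0; exact: le_trans (le_D t It) D_le0.
Qed.

Lemma contraction_dist_le (I : set R) (g h : R -> R) (aa E : R) :
  I !=set0 -> (exists M, forall t, I t -> `|g t - h t| <= M) -> 0 <= aa < 1 -> 0 <= E ->
  (forall y, I y -> exists2 t, I t & `|g y - h y| <= aa * (`|g t - h t| + E)) ->
  forall t, I t -> `|g t - h t| <= E / (1 - aa).
Proof.
move=> I_n0 [M gh_le] /andP[aa_ge0 aa_lt1] E_ge0 gh_rec.
set D := sup [set `|g s - h s| | s in I].
have le_D t : I t -> `|g t - h t| <= D by exact: le_sup_image gh_le.
have D_le : D <= aa * (D + E).
  apply: sup_image_le => // y Iy; have [t It gh_y] := gh_rec y Iy.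
  by apply: le_trans gh_y _; rewrite ler_wpM2l // lerD2r le_D.
move=> t It; apply: le_trans (le_D t It) _.
rewrite ler_pdivlMr ?subr_gt0 //.
have : aa * E <= E by rewrite ler_piMl // ltW.
nra.
Qed.

End BandContraction.

Definition scaling_admissible {R : realType} (C phi Phi phin Phin al : R) :=
  Num.max (- phi / (C - phin)) (- ((C - Phi) / Phin)) <= al /\
  al <= Num.min (phi / Phin) ((C - Phi) / (C - phin)).

(* [F] stands for a value of [f_k] on a piece, [m] for a value of [M_{n,q} f_k]. *)
Lemma scaling_bounds_band (R : realType) (F phi Phi m phin Phin C al c : R) :
  phi <= F <= Phi -> 0 <= phi -> Phi <= C -> 0 <= m -> phin <= m <= Phin -> phin < C ->
  scaling_admissible C phi Phi phin Phin al -> 0 <= c <= C ->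
  0 <= F + al * (c - m) <= C.
Proof.
move=> /andP[phi_le Phi_ge] phi_ge0 Phi_le m_ge0 /andP[phin_le Phin_ge] phin_lt [lo up].
move=> /andP[c_ge0 c_le].
move: lo up; rewrite ge_max le_min => /andP[lo1 lo2] /andP[up1 up2].
have Cphin_gt0 : 0 < C - phin by rewrite subr_gt0.
move: lo1; rewrite ler_pdivrMr // mulrBr => lo1.
move: up2; rewrite ler_pdivlMr // mulrBr => up2.
rewrite mulrBr.
have [Phin_gt0|Phin_le0] := ltP 0 Phin.
  move: up1; rewrite ler_pdivlMr // => up1.
  move: lo2; rewrite -[- ((C - Phi) / Phin)]mulNr ler_pdivrMr // => lo2.
  have [al_ge0|al_lt0] := leP 0 al.
    have : 0 <= al * c <= al * C by rewrite mulr_ge0 // ler_wpM2l.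
    have : al * phin <= al * m <= al * Phin by rewrite !ler_wpM2l // phin_le.
    by move=> /andP[? ?] /andP[? ?]; apply/andP; split; lra.
  have al_le0 := ltW al_lt0.
  have : al * C <= al * c <= 0 by rewrite mulr_le0_ge0 // andbT ler_wnM2l.
  have : al * Phin <= al * m <= al * phin by rewrite !ler_wnM2l // phin_le.
  by move=> /andP[? ?] /andP[? ?]; apply/andP; split; lra.
have m0 : m = 0 by apply/eqP; rewrite eq_le m_ge0 (le_trans Phin_ge Phin_le0).
rewrite m0 mulr0 subr0.
have [al_ge0|al_lt0] := leP 0 al.
  have : 0 <= al * c <= al * C by rewrite mulr_ge0 // ler_wpM2l.
  have : al * phin <= 0 by rewrite mulr_ge0_le0 // -m0.
  by move=> ? /andP[? ?]; apply/andP; split; lra.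
have al_le0 := ltW al_lt0.
have : al * C <= al * c <= 0 by rewrite mulr_le0_ge0 // andbT ler_wnM2l.
have : 0 <= al * phin by rewrite mulr_le0 // -m0.
by move=> ? /andP[? ?]; apply/andP; split; lra.
Qed.

Lemma bernoulli_expr (R : realType) (q : R) i : 0 <= q -> 1 - i%:R * (1 - q) <= q ^+ i.
Proof.
move=> q_ge0; elim: i => [|i IH]; first by rewrite mul0r subr0 expr0.
rewrite exprS -natr1.
have : q * (1 - i%:R * (1 - q)) <= q * q ^+ i by rewrite ler_wpM2l.
have : 0 <= i%:R * ((1 - q) * (1 - q)) by rewrite mulr_ge0 // -expr2 sqr_ge0.
nra.
Qed.

(* Once [1 - q_n < 1 / (2 m)], each of the first [m] terms of [[n]_{q_n}] is at
   least [1/2] by Bernoulli's inequality. *)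
Lemma qint_diverges (R : realType) (q : nat -> R) (M : R) :
  (forall n, (1 <= n)%N -> 0 < q n <= 1) -> q n @[n --> \oo] --> (1 : R) ->
  exists n0, forall n, (n0 <= n)%N -> M <= qint (q n) n.
Proof.
move=> q_in q_cvg; set m := (Num.truncn (2 * `|M|)).+1.
have M_lt : 2 * `|M| < m%:R by exact: truncnS_gt.
have m_gt0 : 0 < m%:R :> R by rewrite ltr0n.
have r_gt0 : 0 < (2 * m%:R)^-1 :> R by rewrite invr_gt0 mulr_gt0.
move: q_cvg => /cvgrPdist_lt /(_ _ r_gt0) [n1 _ q_close].
exists (maxn (maxn n1 m) 1) => n; rewrite !geq_max => /andP[/andP[n1_le m_le] n_ge1].
have /andP[qn_gt0 qn_le1] := q_in n n_ge1.
have qn_close : 1 - q n < (2 * m%:R)^-1.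
  by have := q_close n n1_le; rewrite ger0_norm // subr_ge0.
apply: le_trans (le_qint qn_gt0 m_le); rewrite qintE.
apply: le_trans (_ : \sum_(i < m) (2^-1 : R) <= _).
  by rewrite sumr_const card_ord -mulr_natr; have := ler_norm M; lra.
apply: ler_sum => i _; apply: le_trans (bernoulli_expr i (ltW qn_gt0)).
have : i%:R * (1 - q n) <= m%:R * (1 - q n) by rewrite ler_wpM2r ?subr_ge0 // ler_nat ltnW.
have : m%:R * (1 - q n) <= m%:R * (2 * m%:R)^-1 by rewrite ler_wpM2l // ltW.
have -> : m%:R * (2 * m%:R)^-1 = 2^-1 :> R by field; rewrite lt0r_neq0.
lra.
Qed.

Section MKZUniformApprox.
Variables (R : realType) (x1 xN : R).
Variables (fs : nat -> R -> R) (f : R -> R).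
Hypothesis fs_cont : forall k, (1 <= k)%N -> {within Iset x1 xN, continuous (fs k)}.
Hypothesis f_cont : {within Iset x1 xN, continuous f}.
Hypothesis fs_cvg : supnorm x1 xN (fs k \- f) @[k --> \oo] --> (0 : R).

Lemma supnorm_cvg0_close e : 0 < e -> exists k0, forall k, (1 <= k)%N -> (k0 <= k)%N ->
  forall t, Iset x1 xN t -> `|fs k t - f t| <= e.
Proof.
move=> e_gt0; move: fs_cvg => /cvgrPdist_lt /(_ e e_gt0) [k0 _ fs_close].
exists k0 => k k_ge1 k0_le t It; apply/ltW/(le_lt_trans _ (fs_close k k0_le)).
have fsf_cont : {within Iset x1 xN, continuous (fs k \- f)}.
  move=> s; exact: continuousB (@fs_cont k k_ge1 s) (@f_cont s).
by rewrite sub0r normrN (le_trans _ (ler_norm _)) // (le_supnorm fsf_cont).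
Qed.

Hypothesis x1_lt_xN : x1 < xN.
Hypothesis fs_ge0 : forall k, (1 <= k)%N -> forall t, Iset x1 xN t -> 0 <= fs k t.
Variable q : nat -> R.
Hypothesis q_in : forall n, (1 <= n)%N -> 0 < q n <= 1.
Hypothesis q_cvg : q n @[n --> \oo] --> (1 : R).

Lemma mkz_uniform_approx e : 0 < e -> exists k0, forall k n,
  (1 <= k)%N -> (1 <= n)%N -> (k0 <= k)%N -> (k0 <= n)%N ->
  forall t, Iset x1 xN t -> `|MKZ x1 xN n (q n) (fs k) t - fs k t| <= e.
Proof.
move=> e_gt0; set e4 := e / 4.
have e4_gt0 : 0 < e4 by rewrite divr_gt0.
have [K K_ge0 f_mod] := continuous_Iset_sq_modulus f_cont e4_gt0.
have [k1 fs_close] := supnorm_cvg0_close e4_gt0.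
have [n1 qint_ge] := qint_diverges (K * (xN - x1) ^+ 2 / e4) q_in q_cvg.
exists (maxn k1 n1) => k n k_ge1 n_ge1; rewrite !geq_max => /andP[k1_le _] /andP[_ n1_le].
move=> t It; have /andP[qn_gt0 qn_le1] := q_in n_ge1.
have [B fs_le] := continuous_Iset_bounded (fs_cont k_ge1).
have fs_in s : Iset x1 xN s -> 0 <= fs k s <= B.
  by move=> Is; rewrite fs_ge0 //= (le_trans (ler_norm _)) ?fs_le.
have fs_mod s : Iset x1 xN s -> `|fs k s - fs k t| <= 3 * e4 + K * (s - t) ^+ 2.
  move=> Is; have := fs_close _ k_ge1 k1_le _ Is; have := fs_close _ k_ge1 k1_le _ It.
  have := f_mod _ _ Is It; have := ler_distD (f s) (fs k s) (fs k t).
  have := ler_distD (f t) (f s) (fs k t); rewrite (distrC (fs k t)); lra.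
have e3_ge0 : 0 <= 3 * e4 by rewrite mulr_ge0 // ltW.
have [_] := mkz_approx qn_gt0 qn_le1 x1_lt_xN n_ge1 It e3_ge0 K_ge0 fs_in fs_mod.
have : K * (xN - x1) ^+ 2 / qint (q n) n <= e4.
  by rewrite ler_pdivrMr ?qint_gt0 // -ler_pdivrMl // mulrC qint_ge.
by rewrite /e4; lra.
Qed.

End MKZUniformApprox.

Lemma uniform_scaling_bound (R : realType) (x1 xN : R) N (alpha : nat -> R -> R) :
  (forall i, (1 <= i)%N -> (i < N)%N -> {within Iset x1 xN, continuous (alpha i)}) ->
  (forall i, (1 <= i)%N -> (i < N)%N -> supnorm x1 xN (alpha i) < 1) ->
  exists2 aa, 0 <= aa < 1 & forall i t, (1 <= i)%N -> (i < N)%N -> Iset x1 xN t ->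
    `|alpha i t| <= aa.
Proof.
move=> alpha_cont alpha_lt1.
exists (\big[Num.max/0]_(1 <= i < N) supnorm x1 xN (alpha i)).
  rewrite bigmax_ge_id /= big_seq_cond bigmax_lt // => i.
  rewrite andbT mem_index_iota.
  by case/andP; exact: alpha_lt1.
move=> i t i_ge1 i_lt It; apply: le_trans (le_supnorm (alpha_cont _ i_ge1 i_lt) It) _.
have i_in : i \in index_iota 1 N by rewrite mem_index_iota i_ge1.
by rewrite big_seq_cond (le_bigmax_seq _ _ _ (fun j => supnorm x1 xN (alpha j))) ?i_in.
Qed.

Section Partition.
Variables (R : realType) (N : nat) (x a b : nat -> R).
Hypothesis N_ge2 : (2 <= N)%N.
Hypothesis x_lt : forall i, (1 <= i)%N -> (i < N)%N -> x i < x i.+1.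
Hypothesis u_ends : forall i, (1 <= i)%N -> (i < N)%N ->
  a i * x 1%N + b i = x i /\ a i * x N + b i = x i.+1.

Lemma partition_le i j : (1 <= i)%N -> (i <= j)%N -> (j <= N)%N -> x i <= x j.
Proof.
move=> i_ge1; elim: j => [|j IH] le_ij le_jN; first by move: (leq_trans i_ge1 le_ij).
have [->//|lt_ij] := eqVneq i j.+1.
have le_ij' : (i <= j)%N by rewrite -ltnS ltn_neqAle lt_ij le_ij.
exact: le_trans (IH le_ij' (ltnW le_jN)) (ltW (x_lt (leq_trans i_ge1 le_ij') le_jN)).
Qed.

Lemma partition_ends_lt : x 1%N < x N.
Proof. exact: lt_le_trans (x_lt (leqnn 1) N_ge2) (partition_le _ N_ge2 (leqnn N)). Qed.

Lemma slope_gt0 i : (1 <= i)%N -> (i < N)%N -> 0 < a i.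
Proof.
move=> i_ge1 i_lt; have [e1 e2] := u_ends i_ge1 i_lt.
have : x i.+1 - x i = a i * (x N - x 1%N) by rewrite -e1 -e2; ring.
have := x_lt i_ge1 i_lt; rewrite -subr_gt0 => /[swap] ->.
by rewrite pmulr_lgt0 // subr_gt0 partition_ends_lt.
Qed.

Lemma affine_piece_in i t : (1 <= i)%N -> (i < N)%N ->
  Iset (x 1%N) (x N) t -> Iset (x 1%N) (x N) (a i * t + b i).
Proof.
move=> i_ge1 i_lt /andP[t_ge t_le]; have [e1 e2] := u_ends i_ge1 i_lt.
have a_gt0 := slope_gt0 i_ge1 i_lt.
have := ler_wpM2l (ltW a_gt0) t_ge; have := ler_wpM2l (ltW a_gt0) t_le.
have := partition_le (leqnn 1) i_ge1 (ltnW i_lt); have := partition_le (ltn0Sn i) i_lt (leqnn N).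
by move=> *; apply/andP; split; lra.
Qed.

Lemma partition_locate y j : x 1%N <= y -> (1 <= j)%N -> (j < N)%N -> y <= x j.+1 ->
  exists i, [/\ (1 <= i)%N, (i <= j)%N, x i <= y & y <= x i.+1].
Proof.
move=> y_ge; elim: j => [//|[|j] IH] _ j_lt y_le; first by exists 1%N.
have [y_le'|y_gt] := leP y (x j.+2); last by exists j.+2; split => //; exact: ltW.
have [i [i_ge1 i_le y_ge' y_le'']] := IH isT (ltnW j_lt) y_le'.
by exists i; split => //; exact: leqW.
Qed.

Lemma affine_pieces_cover y : Iset (x 1%N) (x N) y -> exists i,
  [/\ (1 <= i)%N, (i < N)%N & exists2 t, Iset (x 1%N) (x N) t & y = a i * t + b i].
Proof.
move=> /andP[y_ge y_le].
have NB1 : N.-1.+1 = N := prednK (ltnW N_ge2).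
have [i [i_ge1 i_le xi_le le_xi]] : exists i,
    [/\ (1 <= i)%N, (i <= N.-1)%N, x i <= y & y <= x i.+1].
  by apply: partition_locate; rewrite ?NB1 // -ltnS NB1.
have i_lt : (i < N)%N by rewrite -NB1 ltnS.
have [e1 e2] := u_ends i_ge1 i_lt; have a_gt0 := slope_gt0 i_ge1 i_lt.
exists i; split => //; exists ((y - b i) / a i); last by field; exact: lt0r_neq0.
apply/andP; split; first by rewrite ler_pdivlMr // mulrC; lra.
by rewrite ler_pdivrMr // mulrC; lra.
Qed.

Let I := Iset (x 1%N) (x N).

Let I_n0 : I !=set0.
Proof. by exists (x 1%N); rewrite /I /Iset /= lexx ltW // partition_ends_lt. Qed.

Definition admissible_on_piece (h : R -> R) n qn C i al :=
  scaling_admissible C (minI (x 1%N) (x N) (fun s => h (a i * s + b i)))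
    (maxI (x 1%N) (x N) (fun s => h (a i * s + b i)))
    (minI (x 1%N) (x N) (MKZ (x 1%N) (x N) n qn h))
    (maxI (x 1%N) (x N) (MKZ (x 1%N) (x N) n qn h)) al.

Lemma fractal_piece_band (h : R -> R) n qn C al i t :
  (0 < n)%N -> 0 < qn <= 1 -> (forall s, I s -> 0 <= h s) -> {within I, continuous h} ->
  Num.max (minI (x 1%N) (x N) (MKZ (x 1%N) (x N) n qn h)) (supnorm (x 1%N) (x N) h) < C ->
  (1 <= i)%N -> (i < N)%N -> I t ->
  admissible_on_piece h n qn C i al ->
  forall c, 0 <= c <= C ->
  0 <= h (a i * t + b i) + al * (c - MKZ (x 1%N) (x N) n qn h t) <= C.
Proof.
move=> n_gt0 /andP[qn_gt0 qn_le1] h_ge0 h_cont; rewrite gt_max => /andP[phin_lt sup_lt].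
move=> i_ge1 i_lt It al_adm c c_in; set M := MKZ _ _ n qn h.
have h_le s : I s -> h s <= supnorm (x 1%N) (x N) h.
  by move=> Is; rewrite (le_trans (ler_norm _)) // le_supnorm.
have M_in s : I s -> 0 <= M s <= supnorm (x 1%N) (x N) h.
  by move=> Is; apply: mkz_ge0_le => // [|u Iu]; [exact: partition_ends_lt | rewrite h_ge0 ?h_le].
have u_in s : I s -> I (a i * s + b i) by exact: affine_piece_in.
apply: scaling_bounds_band al_adm c_in; last exact: phin_lt.
- apply/andP; split; [apply: (inf_image_le (M := 0)) It | apply: le_sup_image It].
    by move=> s Is; apply: h_ge0; exact: u_in.
  by move=> s Is; apply: h_le; exact: u_in.
- by apply: le_inf_image I_n0 _ => s Is; apply: h_ge0; exact: u_in.
- apply: sup_image_le I_n0 _ => s Is.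
  by apply: le_trans (ltW sup_lt); apply: h_le; exact: u_in.
- by case/andP: (M_in t It).
- apply/andP; split; [apply: (inf_image_le (M := 0)) It |
                       apply: (le_sup_image (M := supnorm (x 1%N) (x N) h)) It].
    by move=> s Is; case/andP: (M_in s Is).
  by move=> s Is; case/andP: (M_in s Is).
Qed.

Section FractalFunction.
Variables (alpha : nat -> R -> R) (aa : R).
Hypothesis aa_in : 0 <= aa < 1.
Hypothesis alpha_le : forall i t, (1 <= i)%N -> (i < N)%N -> I t -> `|alpha i t| <= aa.

Definition fractal_eq (h g : R -> R) n qn := forall i t, (1 <= i)%N -> (i < N)%N -> I t ->
  g (a i * t + b i) = h (a i * t + b i) + alpha i t * (g t - MKZ (x 1%N) (x N) n qn h t).

Lemma fractal_in_band (h g : R -> R) n qn C :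
  (0 < n)%N -> 0 < qn <= 1 -> (forall s, I s -> 0 <= h s) ->
  {within I, continuous h} -> {within I, continuous g} ->
  Num.max (minI (x 1%N) (x N) (MKZ (x 1%N) (x N) n qn h)) (supnorm (x 1%N) (x N) h) < C ->
  (forall i t, (1 <= i)%N -> (i < N)%N -> I t ->
    admissible_on_piece h n qn C i (alpha i t)) ->
  fractal_eq h g n qn -> forall t, I t -> 0 <= g t <= C.
Proof.
move=> n_gt0 qn_in h_ge0 h_cont g_cont C_gt alpha_adm g_eq.
pose M := MKZ (x 1%N) (x N) n qn h.
apply: (contraction_band (aa := aa)) => //.
- exact: continuous_Iset_bounded g_cont.
- have [s Is] := I_n0; apply: le_trans (normr_ge0 (h s)) (ltW (le_lt_trans _ C_gt)).
  by rewrite le_max (le_supnorm h_cont Is) orbT.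
move=> y /affine_pieces_cover[i [i_ge1 i_lt [t It ->]]].
exists t => //; exists (alpha i t), (h (a i * t + b i) - alpha i t * M t).
split; [exact: alpha_le | by rewrite g_eq // /M; ring | move=> c c_in].
have -> : h (a i * t + b i) - alpha i t * M t + alpha i t * c
    = h (a i * t + b i) + alpha i t * (c - M t) by ring.
by apply: fractal_piece_band => //; exact: alpha_adm.
Qed.

Lemma fractal_dist_le (h g : R -> R) n qn E : 0 <= E ->
  {within I, continuous h} -> {within I, continuous g} ->
  (forall t, I t -> `|MKZ (x 1%N) (x N) n qn h t - h t| <= E) ->
  fractal_eq h g n qn -> forall t, I t -> `|g t - h t| <= E / (1 - aa).
Proof.
move=> E_ge0 h_cont g_cont M_close g_eq.
apply: contraction_dist_le => //.
- have gh_cont : {within I, continuous (g \- h)}.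
    by move=> s; exact: continuousB (g_cont s) (h_cont s).
  exact: continuous_Iset_bounded gh_cont.
move=> y /affine_pieces_cover[i [i_ge1 i_lt [t It ->]]].
exists t => //; rewrite g_eq // addrC addKr normrM.
apply: ler_pM; [exact: normr_ge0 | exact: normr_ge0 | exact: alpha_le |].
have := M_close t It; have := ler_distD (h t) (g t) (MKZ (x 1%N) (x N) n qn h t).
by rewrite (distrC (h t)); lra.
Qed.

Lemma fractal_cvg (fs : nat -> R -> R) (f : R -> R) (q : nat -> R)
    (g : nat -> nat -> R -> R) :
  (forall k, (1 <= k)%N -> forall t, I t -> 0 <= fs k t) ->
  (forall k, (1 <= k)%N -> {within I, continuous (fs k)}) -> {within I, continuous f} ->
  supnorm (x 1%N) (x N) (fs k \- f) @[k --> \oo] --> (0 : R) ->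
  (forall n, (1 <= n)%N -> 0 < q n <= 1) -> q n @[n --> \oo] --> (1 : R) ->
  (forall k n, (1 <= k)%N -> (1 <= n)%N ->
     {within I, continuous (g k n)} /\ fractal_eq (fs k) (g k n) n (q n)) ->
  forall eps, 0 < eps -> exists k0, forall k n, (1 <= k)%N -> (1 <= n)%N ->
    (k0 <= k)%N -> (k0 <= n)%N -> supnorm (x 1%N) (x N) (g k n \- f) < eps.
Proof.
move=> fs_ge0 fs_cont f_cont fs_cvg q_in q_cvg g_fractal eps eps_gt0.
have /andP[aa_ge0 aa_lt1] := aa_in.
set e := (1 - aa) * eps / 4.
have e_gt0 : 0 < e by rewrite divr_gt0 // mulr_gt0 // subr_gt0.
have [k1 fs_close] := supnorm_cvg0_close fs_cont f_cont fs_cvg e_gt0.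
have [k2 M_close] := mkz_uniform_approx fs_cont f_cont fs_cvg partition_ends_lt fs_ge0
  q_in q_cvg e_gt0.
exists (maxn k1 k2) => k n k_ge1 n_ge1; rewrite !geq_max => /andP[k1_le k2_le] /andP[_ k2_le'].
have [g_cont g_eq] := g_fractal k n k_ge1 n_ge1.
have g_close := fractal_dist_le (ltW e_gt0) (fs_cont k k_ge1) g_cont
  (M_close k n k_ge1 n_ge1 k2_le k2_le') g_eq.
have e_le : e <= eps / 4 by rewrite /e; have := mulr_ge0 aa_ge0 (ltW eps_gt0); lra.
have e_div : e / (1 - aa) = eps / 4 by rewrite /e; field; rewrite lt0r_neq0 // subr_gt0.
apply: le_lt_trans (_ : eps / 2 < eps); last by lra.
apply: sup_image_le I_n0 _ => t It /=.
have := g_close t It; rewrite e_div; have := fs_close k k_ge1 k1_le t It.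
have := ler_distD (fs k t) (g k n t) (f t); lra.
Qed.

End FractalFunction.

End Partition.

Theorem theorem4p2 (R : realType) (N : nat) (x : nat -> R) (a b : nat -> R)
  (alpha : nat -> R -> R) (fs : nat -> R -> R) (f : R -> R) (q : nat -> R)
  (C : nat -> nat -> R) (g : nat -> nat -> R -> R) :
  (2 <= N)%N ->
  (forall i, (1 <= i)%N -> (i < N)%N -> x i < x i.+1) ->
  (forall i, (1 <= i)%N -> (i < N)%N ->
     a i * x 1%N + b i = x i /\ a i * x N + b i = x i.+1) ->
  (* f_k positive, continuous, converging uniformly to f continuous *)
  (forall k, (1 <= k)%N -> forall t, Iset (x 1%N) (x N) t -> 0 <= fs k t) ->
  (forall k, (1 <= k)%N -> {within Iset (x 1%N) (x N), continuous (fs k)}) ->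
  {within Iset (x 1%N) (x N), continuous f} ->
  supnorm (x 1%N) (x N) (fs k \- f) @[k --> \oo] --> (0 : R) ->
  (* q_n in (0,1], q_n -> 1 *)
  (forall n, (1 <= n)%N -> 0 < q n <= 1) ->
  q n @[n --> \oo] --> (1 : R) ->
  (* C^dagger_{n,k} *)
  (forall n k, (1 <= n)%N -> (1 <= k)%N ->
     0 < C n k /\
     Num.max (minI (x 1%N) (x N) (MKZ (x 1%N) (x N) n (q n) (fs k)))
             (supnorm (x 1%N) (x N) (fs k)) < C n k) ->
  (* scaling functions *)
  (forall i, (1 <= i)%N -> (i < N)%N ->
     {within Iset (x 1%N) (x N), continuous (alpha i)}) ->
  (forall i, (1 <= i)%N -> (i < N)%N -> supnorm (x 1%N) (x N) (alpha i) < 1) ->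
  (forall k n i t, (1 <= k)%N -> (1 <= n)%N -> (1 <= i)%N -> (i < N)%N ->
     Iset (x 1%N) (x N) t ->
     let phi := minI (x 1%N) (x N) (fun s => fs k (a i * s + b i)) in
     let Phi := maxI (x 1%N) (x N) (fun s => fs k (a i * s + b i)) in
     let phin := minI (x 1%N) (x N) (MKZ (x 1%N) (x N) n (q n) (fs k)) in
     let Phin := maxI (x 1%N) (x N) (MKZ (x 1%N) (x N) n (q n) (fs k)) in
     Num.max (- phi / (C n k - phin)) (- ((C n k - Phi) / Phin)) <= alpha i t /\
     alpha i t <= Num.min (phi / Phin) ((C n k - Phi) / (C n k - phin))) ->
  (* g k n is the quantum MKZ-fractal function of f_k with parameter q_n *)
  (forall k n, (1 <= k)%N -> (1 <= n)%N ->
     {within Iset (x 1%N) (x N), continuous (g k n)} /\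
     forall i t, (1 <= i)%N -> (i < N)%N -> Iset (x 1%N) (x N) t ->
       g k n (a i * t + b i) =
       fs k (a i * t + b i) +
       alpha i t * (g k n t - MKZ (x 1%N) (x N) n (q n) (fs k) t)) ->
  (forall k n, (1 <= k)%N -> (1 <= n)%N ->
     forall t, Iset (x 1%N) (x N) t -> 0 <= g k n t) /\
  (forall eps, 0 < eps -> exists k0 : nat, forall k n,
     (1 <= k)%N -> (1 <= n)%N -> (k0 <= k)%N -> (k0 <= n)%N ->
     supnorm (x 1%N) (x N) (g k n \- f) < eps).
Proof.
move=> N_ge2 x_lt u_ends fs_ge0 fs_cont f_cont fs_cvg q_in q_cvg C_gt alpha_cont
  alpha_lt1 alpha_adm g_fractal.
have [aa aa_in alpha_le] := uniform_scaling_bound alpha_cont alpha_lt1.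
split; last exact: (fractal_cvg N_ge2 x_lt u_ends aa_in alpha_le fs_ge0 fs_cont f_cont
  fs_cvg q_in q_cvg g_fractal).
move=> k n k_ge1 n_ge1 t It; have [g_cont g_eq] := g_fractal k n k_ge1 n_ge1.
have [_ C_lt] := C_gt n k n_ge1 k_ge1.
have adm i s := alpha_adm k n i s k_ge1 n_ge1.
by case/andP: (fractal_in_band N_ge2 x_lt u_ends aa_in alpha_le n_ge1 (q_in n n_ge1)
  (fs_ge0 k k_ge1) (fs_cont k k_ge1) g_cont C_lt adm g_eq It).
Qed.
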